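(* Let $\mathbf K$ be an M$\Delta$C, let $\operatorname{Rad}\mathbf K$ be its prime radical and $\mathbf N=\{A\in\mathbf K: A^{\otimes n}\cong0\text{ for some }n\ge1\}$. Then: (a) $\operatorname{Rad}\mathbf K\subseteq\mathbf N$; (b) if $\mathbf K$ has at least one completely prime ideal, then $\operatorname{Rad}\mathbf K\subseteq\mathbf N\subseteq\operatorname{CP\text{-}Rad}\mathbf K$; (c) if $\mathbf K$ is symmetric monoidal, then $\operatorname{Rad}\mathbf K=\mathbf N=\operatorname{CP\text{-}Rad}\mathbf K$.
   Context: M$\Delta$C: triangulated category with monoidal structure $(\otimes,\mathbf 1)$, $\otimes$ exact in each variable. Thick ideal: full triangulated subcategory closed under summands and two-sided tensoring with arbitrary objects. A prime ideal is a proper thick ideal $\mathbf P$ with $\mathbf I\otimes\mathbf J\subseteq\mathbf P\Rightarrow\mathbf I\subseteq\mathbf P$ or $\mathbf J\subseteq\mathbf P$ for thick ideals $\mathbf I,\mathbf J$; the prime radical $\operatorname{Rad}\mathbf K$ is the intersection of all prime ideals. A completely prime ideal is a proper thick ideal $\mathbf P$ such that $A\otimes B\in\mathbf P$ implies $A\in\mathbf P$ or $B\in\mathbf P$; $\operatorname{CP\text{-}Rad}\mathbf K$ is the intersection of all completely prime ideals. *)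

From HB Require Import structures.
From mathcomp Require Import all_boot all_algebra.
Set Implicit Arguments. Unset Strict Implicit. Unset Printing Implicit Defensive.
Import GRing.Theory.
Local Open Scope ring_scope.

Record PreaddCat := {
  Ob :> Type;
  hom : Ob -> Ob -> zmodType;
  idm : forall X, hom X X;
  comp : forall X Y Z, hom Y Z -> hom X Y -> hom X Z;
  comp_assoc : forall X Y Z W (h : hom Z W) (g : hom Y Z) (f : hom X Y),
      comp h (comp g f) = comp (comp h g) f;
  comp_idl : forall X Y (f : hom X Y), comp (idm Y) f = f;
  comp_idr : forall X Y (f : hom X Y), comp f (idm X) = f;
  compDl : forall X Y Z (g g' : hom Y Z) (f : hom X Y),
      comp (g + g') f = comp g f + comp g' f;
  compDr : forall X Y Z (g : hom Y Z) (f f' : hom X Y),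
      comp g (f + f') = comp g f + comp g f';
  zero_ob : Ob;
  zero_ob_zero : idm zero_ob = 0;
  biproducts : forall X Y, exists (S : Ob) (i1 : hom X S) (i2 : hom Y S)
      (p1 : hom S X) (p2 : hom S Y),
      [/\ comp p1 i1 = idm X, comp p2 i2 = idm Y,
          comp p1 i2 = 0, comp p2 i1 = 0
        & comp i1 p1 + comp i2 p2 = idm S]
}.

Arguments hom {p} : rename.
Arguments idm {p} : rename.
Arguments zero_ob {p} : rename.

Definition cmp {C : PreaddCat} {X Y Z : C} (g : hom Y Z) (f : hom X Y) : hom X Z :=
  comp g f.

Definition isIso {C : PreaddCat} {X Y : C} (f : hom X Y) : Prop :=
  exists g : hom Y X, cmp g f = idm X /\ cmp f g = idm Y.

Definition iso {C : PreaddCat} (X Y : C) : Prop := exists f : hom X Y, isIso f.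

(* Triangulated structure (TR1-TR4, Neeman style)                      *)
Record TriStruct (C : PreaddCat) := {
  sh : C -> C;
  shm : forall X Y : C, hom X Y -> hom (sh X) (sh Y);
  shm_id : forall X : C, shm (idm X) = idm (sh X);
  shm_comp : forall (X Y Z : C) (g : hom Y Z) (f : hom X Y),
      shm (cmp g f) = cmp (shm g) (shm f);
  shm_add : forall (X Y : C) (f g : hom X Y), shm (f + g) = shm f + shm g;
  sh_full : forall (X Y : C) (g : hom (sh X) (sh Y)), exists f, shm f = g;
  sh_faithful : forall (X Y : C) (f f' : hom X Y), shm f = shm f' -> f = f';
  sh_esurj : forall Y : C, exists X, iso (sh X) Y;
  dist : forall X Y Z : C, hom X Y -> hom Y Z -> hom Z (sh X) -> Prop;
  TR1a : forall X : C, dist (idm X) (0 : hom X zero_ob) 0;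
  TR1b : forall (X Y : C) (f : hom X Y), exists Z (g : hom Y Z) (h : hom Z (sh X)),
      dist f g h;
  TR1c : forall (X Y Z X' Y' Z' : C) (f : hom X Y) (g : hom Y Z) (h : hom Z (sh X))
      (f' : hom X' Y') (g' : hom Y' Z') (h' : hom Z' (sh X'))
      (a : hom X X') (b : hom Y Y') (c : hom Z Z'),
      isIso a -> isIso b -> isIso c ->
      cmp b f = cmp f' a -> cmp c g = cmp g' b -> cmp (shm a) h = cmp h' c ->
      dist f g h -> dist f' g' h';
  TR2 : forall (X Y Z : C) (f : hom X Y) (g : hom Y Z) (h : hom Z (sh X)),
      dist f g h <-> dist g h (- shm f);
  TR3 : forall (X Y Z X' Y' Z' : C) (f : hom X Y) (g : hom Y Z) (h : hom Z (sh X))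
      (f' : hom X' Y') (g' : hom Y' Z') (h' : hom Z' (sh X'))
      (u : hom X X') (v : hom Y Y'),
      dist f g h -> dist f' g' h' -> cmp v f = cmp f' u ->
      exists w : hom Z Z', cmp w g = cmp g' v /\ cmp (shm u) h = cmp h' w;
  TR4 : forall (X Y Z Z' X' Y' : C) (f : hom X Y) (g : hom Y Z)
      (f1 : hom Y Z') (f2 : hom Z' (sh X))
      (g1 : hom Z X') (g2 : hom X' (sh Y))
      (h1 : hom Z Y') (h2 : hom Y' (sh X)),
      dist f f1 f2 -> dist g g1 g2 -> dist (cmp g f) h1 h2 ->
      exists (u : hom Z' Y') (v : hom Y' X'),
        [/\ dist u v (cmp (shm f1) g2), cmp u f1 = cmp h1 g, cmp h2 u = f2,
            cmp v h1 = g1 & cmp g2 v = cmp (shm f) h2]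
}.

Arguments sh {C} t.
Arguments shm {C} t {X Y}.
Arguments dist {C} t {X Y Z}.

Record MonStruct (C : PreaddCat) (T : TriStruct C) := {
  tens : C -> C -> C;
  tensm : forall A A' B B' : C, hom A A' -> hom B B' -> hom (tens A B) (tens A' B');
  tensm_id : forall A B : C, tensm (idm A) (idm B) = idm (tens A B);
  tensm_comp : forall (A A' A'' B B' B'' : C) (f : hom A A') (f' : hom A' A'')
      (g : hom B B') (g' : hom B' B''),
      tensm (cmp f' f) (cmp g' g) = cmp (tensm f' g') (tensm f g);
  tensm_addl : forall (A A' B B' : C) (f f' : hom A A') (g : hom B B'),
      tensm (f + f') g = tensm f g + tensm f' g;
  tensm_addr : forall (A A' B B' : C) (f : hom A A') (g g' : hom B B'),
      tensm f (g + g') = tensm f g + tensm f g';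
  unit : C;
  assoc : forall A B D : C, hom (tens (tens A B) D) (tens A (tens B D));
  assoc_iso : forall A B D : C, isIso (assoc A B D);
  assoc_nat : forall (A A' B B' D D' : C) (f : hom A A') (g : hom B B') (h : hom D D'),
      cmp (assoc A' B' D') (tensm (tensm f g) h) = cmp (tensm f (tensm g h)) (assoc A B D);
  lunit : forall A : C, hom (tens unit A) A;
  lunit_iso : forall A : C, isIso (lunit A);
  lunit_nat : forall (A A' : C) (f : hom A A'),
      cmp f (lunit A) = cmp (lunit A') (tensm (idm unit) f);
  runit : forall A : C, hom (tens A unit) A;
  runit_iso : forall A : C, isIso (runit A);
  runit_nat : forall (A A' : C) (f : hom A A'),
      cmp f (runit A) = cmp (runit A') (tensm f (idm unit));
  pentagon : forall A B D E : C,
      cmp (assoc A B (tens D E)) (assoc (tens A B) D E)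
      = cmp (tensm (idm A) (assoc B D E))
            (cmp (assoc A (tens B D) E) (tensm (assoc A B D) (idm E)));
  triangle : forall A B : C,
      cmp (tensm (idm A) (lunit B)) (assoc A unit B) = tensm (runit A) (idm B);
  (* A (x) - is a triangulated functor *)
  lsh : forall A X : C, hom (tens A (sh T X)) (sh T (tens A X));
  lsh_iso : forall A X : C, isIso (lsh A X);
  lsh_nat : forall (A X Y : C) (f : hom X Y),
      cmp (shm T (tensm (idm A) f)) (lsh A X) = cmp (lsh A Y) (tensm (idm A) (shm T f));
  lexact : forall (A X Y Z : C) (f : hom X Y) (g : hom Y Z) (h : hom Z (sh T X)),
      dist T f g h ->
      dist T (tensm (idm A) f) (tensm (idm A) g) (cmp (lsh A X) (tensm (idm A) h));
  (* - (x) A is a triangulated functor *)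
  rsh : forall A X : C, hom (tens (sh T X) A) (sh T (tens X A));
  rsh_iso : forall A X : C, isIso (rsh A X);
  rsh_nat : forall (A X Y : C) (f : hom X Y),
      cmp (shm T (tensm f (idm A))) (rsh A X) = cmp (rsh A Y) (tensm (shm T f) (idm A));
  rexact : forall (A X Y Z : C) (f : hom X Y) (g : hom Y Z) (h : hom Z (sh T X)),
      dist T f g h ->
      dist T (tensm f (idm A)) (tensm g (idm A)) (cmp (rsh A X) (tensm h (idm A)))
}.

Arguments tens {C T} m.
Arguments tensm {C T} m {A A' B B'}.
Arguments assoc {C T} m.
Arguments unit {C T} m.

Record SymStruct (C : PreaddCat) (T : TriStruct C) (M : MonStruct T) := {
  braid : forall A B : C, hom (tens M A B) (tens M B A);
  braid_nat : forall (A A' B B' : C) (f : hom A A') (g : hom B B'),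
      cmp (braid A' B') (tensm M f g) = cmp (tensm M g f) (braid A B);
  braid_invol : forall A B : C, cmp (braid B A) (braid A B) = idm (tens M A B);
  hexagon : forall A B D : C,
      cmp (assoc M B D A) (cmp (braid A (tens M B D)) (assoc M A B D))
      = cmp (tensm M (idm B) (braid A D))
            (cmp (assoc M B A D) (tensm M (braid A B) (idm D)))
}.

Section Ideals.
Variables (C : PreaddCat) (T : TriStruct C) (M : MonStruct T).

Definition thick_ideal (P : C -> Prop) : Prop :=
  [/\ P zero_ob /\ (forall X Y : C, iso X Y -> P X -> P Y),
      (forall X : C, P X <-> P (sh T X)),
      (forall (X Y Z : C) (f : hom X Y) (g : hom Y Z) (h : hom Z (sh T X)),
          dist T f g h -> P X -> P Y -> P Z),
      (forall (X Y : C) (i : hom X Y) (p : hom Y X), cmp p i = idm X -> P Y -> P X)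
    & (forall A B : C, P A -> P (tens M A B) /\ P (tens M B A))].

Definition proper (P : C -> Prop) : Prop := exists X : C, ~ P X.

Definition prime_ideal (P : C -> Prop) : Prop :=
  [/\ thick_ideal P, proper P &
      forall I J : C -> Prop, thick_ideal I -> thick_ideal J ->
        (forall A B : C, I A -> J B -> P (tens M A B)) ->
        (forall A, I A -> P A) \/ (forall B, J B -> P B)].

Definition completely_prime_ideal (P : C -> Prop) : Prop :=
  [/\ thick_ideal P, proper P &
      forall A B : C, P (tens M A B) -> P A \/ P B].

Definition Rad (A : C) : Prop := forall P, prime_ideal P -> P A.
Definition CPRad (A : C) : Prop := forall P, completely_prime_ideal P -> P A.

(* tpow A n = A^{(x)(n+1)} = (..(A (x) A) (x) ..) (x) A *)
Fixpoint tpow (A : C) (n : nat) : C :=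
  match n with O => A | S k => tens M (tpow A k) A end.

Definition tnilpotent (A : C) : Prop := exists n : nat, iso (tpow A n) zero_ob.

End Ideals.

(* If [A] is not tensor-nilpotent, no power of [A] is a zero object, and Zorn's lemma
   gives a thick ideal [P] maximal among those containing no power of [A].  Such a [P]
   is prime: if [I (x) J] lies in [P] but neither [I] nor [J] does, maximality puts
   some [A^n] in the thick ideal generated by [P] and [I] and some [A^m] in the one
   generated by [P] and [J]; these two ideals multiply into [P], so
   [A^(n+m) ~ A^n (x) A^m] lies in [P], a contradiction.  A completely prime ideal contains [A^(n+1) = A^n (x) A] whenever
   [A^(n+1) ~ 0], hence [A] by descending induction.  Finally, with a braiding the
   objects [B] with [X (x) B] in [P] form a thick ideal, so [X (x) Y] in [P] makes the
   ideals generated by [X] and [Y] multiply into [P]: primes are completely prime. *)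

From Pilot Require Import Defs.
From mathcomp Require Import all_boot all_algebra.
From mathcomp Require Import boolp classical_sets.
Set Implicit Arguments. Unset Strict Implicit. Unset Printing Implicit Defensive.
Import GRing.Theory.
Local Open Scope ring_scope.
Local Open Scope classical_set_scope.
Local Notation hom := (@Defs.hom _).
Local Notation idm := (@Defs.idm _).

Section Preadditive.
Variable C : PreaddCat.

Lemma cmpA (X Y Z W : C) (h : hom Z W) (g : hom Y Z) (f : hom X Y) :
  cmp h (cmp g f) = cmp (cmp h g) f.
Proof. exact: comp_assoc. Qed.

Lemma cmp1l (X Y : C) (f : hom X Y) : cmp (idm Y) f = f.
Proof. exact: comp_idl. Qed.

Lemma cmp1r (X Y : C) (f : hom X Y) : cmp f (idm X) = f.
Proof. exact: comp_idr. Qed.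

Lemma cmp0l (X Y Z : C) (f : hom X Y) : cmp (0 : hom Y Z) f = 0.
Proof. by apply: (addrI (cmp 0 f)); rewrite addr0 -compDl addr0. Qed.

Lemma cmp0r (X Y Z : C) (g : hom Y Z) : cmp g (0 : hom X Y) = 0.
Proof. by apply: (addrI (cmp g 0)); rewrite addr0 -compDr addr0. Qed.

Lemma hom_eq0_src (X Y : C) (f : hom X Y) : idm X = 0 -> f = 0.
Proof. by move=> X0; rewrite -(cmp1r f) X0 cmp0r. Qed.

Lemma hom_eq0_tgt (X Y : C) (f : hom X Y) : idm Y = 0 -> f = 0.
Proof. by move=> Y0; rewrite -(cmp1l f) Y0 cmp0l. Qed.

Lemma iso_zero_obE (X : C) : iso X zero_ob <-> idm X = 0.
Proof.
split=> [[f [g [gf _]]]|X0].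
  by rewrite -gf (hom_eq0_tgt f (zero_ob_zero C)) cmp0r.
by exists 0, 0; rewrite !cmp0l X0 zero_ob_zero.
Qed.

Lemma iso_refl (X : C) : iso X X.
Proof. by exists (idm X), (idm X); rewrite cmp1l. Qed.

Lemma iso_sym (X Y : C) : iso X Y -> iso Y X.
Proof. by move=> [f [g [gf fg]]]; exists g, f. Qed.

Lemma isIso_cmp (X Y Z : C) (g : hom Y Z) (f : hom X Y) :
  isIso f -> isIso g -> isIso (cmp g f).
Proof.
move=> [f' [f'f ff']] [g' [g'g gg']]; exists (cmp f' g'); split.
  by rewrite cmpA -(cmpA f') g'g cmp1r.
by rewrite cmpA -(cmpA g) ff' cmp1r.
Qed.

Lemma iso_trans (X Y Z : C) : iso X Y -> iso Y Z -> iso X Z.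
Proof. by move=> [f isof] [g isog]; exists (cmp g f); apply: isIso_cmp. Qed.

End Preadditive.

Section Triangulated.
Variables (C : PreaddCat) (T : TriStruct C).

Lemma shm0 (X Y : C) : shm T (0 : hom X Y) = 0.
Proof. by apply: (addrI (shm T 0)); rewrite -shm_add !addr0. Qed.

Lemma dist_zero_idm (W : C) :
  exists Q : C, dist T (0 : hom Q W) (idm W) (0 : hom W (sh T Q)).
Proof.
have [Q [e [e' [e'e ee']]]] := sh_esurj T (zero_ob : C).
exists Q; apply/TR2; rewrite shm0 oppr0.
apply: (TR1c (a := idm W) (b := idm W) (c := e') _ _ _ _ _ _ (TR1a T W)).
- by exists (idm W); rewrite cmp1l.
- by exists (idm W); rewrite cmp1l.
- by exists e.
- by rewrite cmp1l.
- by rewrite cmp0l cmp0r.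
- by rewrite cmp0l cmp0r.
Qed.

Lemma dist_factor (X Y Z W : C) (f : hom X Y) (g : hom Y Z) (h : hom Z (sh T X))
    (u : hom Z W) :
  dist T f g h -> cmp u g = 0 -> exists k : hom (sh T X) W, cmp k h = u.
Proof.
move=> Dfgh ug0; have [Q DQ] := dist_zero_idm W.
have [k [kh _]] : exists k : hom (sh T X) W,
    cmp k h = cmp (idm W) u /\ cmp (shm T (0 : hom Y Q)) (- shm T f) = cmp 0 k.
  by apply: TR3 (proj1 (TR2 _ _ _) Dfgh) DQ _; rewrite ug0 cmp0r.
by exists k; rewrite kh cmp1l.
Qed.

End Triangulated.

Section Monoidal.
Variables (C : PreaddCat) (T : TriStruct C) (M : MonStruct T).

Lemma tensm0l (A A' B B' : C) (g : hom B B') : tensm M (0 : hom A A') g = 0.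
Proof. by apply: (addrI (tensm M 0 g)); rewrite -tensm_addl !addr0. Qed.

Lemma tensm0r (A A' B B' : C) (f : hom A A') : tensm M f (0 : hom B B') = 0.
Proof. by apply: (addrI (tensm M f 0)); rewrite -tensm_addr !addr0. Qed.

Lemma iso_tens (A A' B B' : C) :
  iso A A' -> iso B B' -> iso (tens M A B) (tens M A' B').
Proof.
move=> [f [f' [f'f ff']]] [g [g' [g'g gg']]].
by exists (tensm M f g), (tensm M f' g'); rewrite -!tensm_comp f'f ff' g'g gg' !tensm_id.
Qed.

Lemma iso_assoc (A B D : C) : iso (tens M (tens M A B) D) (tens M A (tens M B D)).
Proof. by exists (assoc M A B D); apply: assoc_iso. Qed.

Lemma iso_lsh (A X : C) : iso (tens M A (sh T X)) (sh T (tens M A X)).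
Proof. by exists (lsh M A X); apply: lsh_iso. Qed.

Lemma iso_rsh (A X : C) : iso (tens M (sh T X) A) (sh T (tens M X A)).
Proof. by exists (rsh M A X); apply: rsh_iso. Qed.

Lemma tpow_tens (A : C) (m n : nat) :
  iso (tens M (tpow M A m) (tpow M A n)) (tpow M A (m + n).+1).
Proof.
elim: n => [|n IHn]; first by rewrite addn0; apply: iso_refl.
rewrite addnS /=; apply: iso_trans (iso_sym (iso_assoc _ _ _)) _.
exact: iso_tens IHn (iso_refl A).
Qed.

End Monoidal.

Section ThickIdeals.
Variables (C : PreaddCat) (T : TriStruct C) (M : MonStruct T).
Implicit Types (P Q R I J : set C) (A B X Y : C).

Definition thick_subcategory P :=
  [/\ P zero_ob /\ (forall X Y, iso X Y -> P X -> P Y),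
      (forall X, P X <-> P (sh T X)),
      (forall (X Y Z : C) (f : hom X Y) (g : hom Y Z) (h : hom Z (sh T X)),
          dist T f g h -> P X -> P Y -> P Z)
    & (forall X Y (i : hom X Y) (p : hom Y X), cmp p i = idm X -> P Y -> P X)].

Lemma thick_idealP P : thick_ideal M P <->
  thick_subcategory P /\ (forall A B, P A -> P (tens M A B) /\ P (tens M B A)).
Proof. by split=> [[? ? ? ? ?]|[[? ? ? ?] ?]]. Qed.

Section Closure.
Variables (P : set C) (thickP : thick_ideal M P).

Lemma thick0 : P zero_ob.
Proof. by case: thickP => -[]. Qed.

Lemma thick_iso X Y : iso X Y -> P X -> P Y.
Proof. by case: thickP => -[_ isoP] _ _ _ _; apply: isoP. Qed.

Lemma thick_zero_ob X : iso X zero_ob -> P X.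
Proof. by move/iso_sym/thick_iso; apply; apply: thick0. Qed.

Lemma thick_tensl A B : P A -> P (tens M A B).
Proof. by case: thickP => _ _ _ _ /(_ A B) /[apply] -[]. Qed.

Lemma thick_tensr A B : P B -> P (tens M A B).
Proof. by case: thickP => _ _ _ _ /(_ B A) /[apply] -[]. Qed.

End Closure.

Lemma thick_subcategory_bigcap (K : Type) (D : set K) (F : K -> set C) :
  (forall k, D k -> thick_subcategory (F k)) ->
  thick_subcategory (\bigcap_(k in D) F k).
Proof.
move=> thickF; split.
- split=> [k /thickF [[]]//|X Y XY FX k Dk].
  by case: (thickF k Dk) => -[_ isoF] _ _ _; apply: isoF XY (FX k Dk).
- move=> X; split=> FX k Dk; case: (thickF k Dk) => _ shF _ _.
    by apply/(shF X); apply: FX.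
  by apply/(shF X); apply: FX.
- move=> X Y Z f g h Dfgh FX FY k Dk; case: (thickF k Dk) => _ _ triF _.
  exact: triF Dfgh (FX k Dk) (FY k Dk).
- move=> X Y i p pi FY k Dk; case: (thickF k Dk) => _ _ _ retF.
  exact: retF pi (FY k Dk).
Qed.

Lemma thick_subcategory_tensl P X :
  thick_ideal M P -> thick_subcategory (fun B => P (tens M X B)).
Proof.
move=> thickP; have [[_ isoP] shP triP retP _] := thickP; split.
- split=> [|B B' BB']; first exact: thick_tensr (thick0 thickP).
  exact/isoP/iso_tens/BB'/iso_refl.
- move=> B; rewrite shP; split; apply: isoP; [apply/iso_sym/iso_lsh|apply: iso_lsh].
- by move=> B1 B2 B3 f g h /(lexact M X); apply: triP.
- move=> B1 B2 i p pi; apply: retP (tensm M (idm X) i) (tensm M (idm X) p) _.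
  by rewrite -tensm_comp cmp1l pi tensm_id.
Qed.

Lemma thick_subcategory_tensr P B :
  thick_ideal M P -> thick_subcategory (fun A => P (tens M A B)).
Proof.
move=> thickP; have [[_ isoP] shP triP retP _] := thickP; split.
- split=> [|A A' AA']; first exact: thick_tensl (thick0 thickP).
  exact/isoP/iso_tens/iso_refl.
- move=> A; rewrite shP; split; apply: isoP; [apply/iso_sym/iso_rsh|apply: iso_rsh].
- by move=> A1 A2 A3 f g h /(rexact M B); apply: triP.
- move=> A1 A2 i p pi; apply: retP (tensm M i (idm B)) (tensm M p (idm B)) _.
  by rewrite -tensm_comp cmp1l pi tensm_id.
Qed.

Lemma thick_ideal_zero : thick_ideal M (fun X => iso X zero_ob).
Proof.
have -> : (fun X => iso X zero_ob) = (fun X => idm X = 0).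
  by apply/funext => X; apply/propext/iso_zero_obE.
split.
- split=> [|X Y [f [g [_ fg]]] X0]; first exact: zero_ob_zero.
  by rewrite -fg (hom_eq0_src f X0) cmp0l.
- by move=> X; split=> [X0|SX0]; [rewrite -shm_id X0 shm0|
    apply: (@sh_faithful _ T); rewrite shm_id shm0].
- move=> X Y Z f g h Dfgh X0 Y0.
  have [k kh] := dist_factor (u := idm Z) Dfgh (hom_eq0_src _ Y0).
  by rewrite -kh (hom_eq0_tgt h) ?cmp0r // -shm_id X0 shm0.
- by move=> X Y i p pi Y0; rewrite -pi (hom_eq0_src p Y0) cmp0l.
- by move=> A B A0; rewrite -!tensm_id A0 tensm0l tensm0r.
Qed.

Lemma thick_ideal_bigcup (G : set (set C)) :
  G !=set0 -> (forall Q, G Q -> thick_ideal M Q) -> total_on G subset ->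
  thick_ideal M (\bigcup_(Q in G) Q).
Proof.
move=> [Q0 GQ0] thickG totG.
have common (Q1 Q2 : set C) (X1 X2 : C) : G Q1 -> G Q2 -> Q1 X1 -> Q2 X2 ->
    exists2 Q, G Q & Q X1 /\ Q X2.
  move=> GQ1 GQ2 QX1 QX2; case: (totG _ _ GQ1 GQ2) => [Q12|Q21].
    by exists Q2 => //; split=> //; apply: Q12.
  by exists Q1 => //; split=> //; apply: Q21.
split.
- split; first by exists Q0 => //; apply: thick0 (thickG _ GQ0).
  move=> X Y XY [Q GQ QX]; exists Q => //.
  exact: (thick_iso (thickG _ GQ) XY QX).
- move=> X; split=> -[Q GQ QX]; exists Q => //;
    by case: (thickG _ GQ) => _ shQ _ _ _; apply/(shQ X).
- move=> X Y Z f g h Dfgh [Q1 GQ1 QX] [Q2 GQ2 QY].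
  have [Q GQ [QX' QY']] := common _ _ _ _ GQ1 GQ2 QX QY.
  by case: (thickG _ GQ) => _ _ triQ _ _; exists Q => //; apply: triQ Dfgh QX' QY'.
- move=> X Y i p pi [Q GQ QY]; case: (thickG _ GQ) => _ _ _ retQ _.
  by exists Q => //; apply: retQ pi QY.
- move=> A B [Q GQ QA]; split; exists Q => //.
    exact: (thick_tensl (thickG _ GQ) B QA).
  exact: (thick_tensr (thickG _ GQ) B QA).
Qed.

Definition thick_gen Q : set C :=
  \bigcap_(R in [set R | thick_ideal M R /\ Q `<=` R]) R.

Lemma thick_ideal_gen Q : thick_ideal M (thick_gen Q).
Proof.
apply/thick_idealP; split.
  by apply: thick_subcategory_bigcap => R [/thick_idealP[]].
move=> A B genA; split=> R [thickR QR].
  exact: (thick_tensl thickR B (genA R (conj thickR QR))).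
exact: (thick_tensr thickR B (genA R (conj thickR QR))).
Qed.

Lemma thick_gen_sub Q : Q `<=` thick_gen Q.
Proof. by move=> X QX R [_]; apply. Qed.

Lemma thick_gen_min Q R : thick_ideal M R -> Q `<=` R -> thick_gen Q `<=` R.
Proof. by move=> thickR QR X; apply. Qed.

Lemma thick_ideal_annr P I : thick_ideal M P -> thick_ideal M I ->
  thick_ideal M (\bigcap_(A in I) [set B | P (tens M A B)]).
Proof.
move=> thickP thickI; apply/thick_idealP; split.
  by apply: thick_subcategory_bigcap => A _; apply: thick_subcategory_tensl.
move=> B W annB; split=> A IA.
  exact: (thick_iso thickP (iso_assoc M A B W) (thick_tensl thickP W (annB A IA))).
exact: (thick_iso thickP (iso_assoc M A W B) (annB _ (thick_tensl thickI W IA))).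
Qed.

Lemma thick_ideal_annl P J : thick_ideal M P -> thick_ideal M J ->
  thick_ideal M (\bigcap_(B in J) [set A | P (tens M A B)]).
Proof.
move=> thickP thickJ; apply/thick_idealP; split.
  by apply: thick_subcategory_bigcap => B _; apply: thick_subcategory_tensr.
move=> A W annA; split=> B JB.
  exact: (thick_iso thickP (iso_sym (iso_assoc M A W B))
            (annA _ (thick_tensr thickJ W JB))).
exact: (thick_iso thickP (iso_sym (iso_assoc M W A B))
          (thick_tensr thickP W (annA B JB))).
Qed.

(* The usual argument [(P + I)(P + J) <= P] for ideals of a ring. *)
Lemma thick_gen_tens P I J :
  thick_ideal M P -> thick_ideal M I -> thick_ideal M J ->
  (forall A B, I A -> J B -> P (tens M A B)) ->
  forall A B, thick_gen (P `|` I) A -> thick_gen (P `|` J) B -> P (tens M A B).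
Proof.
move=> thickP thickI thickJ IJP.
have genJ_ann : thick_gen (P `|` J) `<=` \bigcap_(A in I) [set B | P (tens M A B)].
  apply: thick_gen_min; first exact: thick_ideal_annr.
  by move=> B [PB|JB] A IA; [apply: thick_tensr|apply: IJP].
move=> A B genA; move: A genA B; apply: thick_gen_min.
  exact: thick_ideal_annl (thick_ideal_gen _).
by move=> A [PA|IA] B genB; [apply: thick_tensl|apply: genJ_ann].
Qed.

Section Symmetric.
Variable S : SymStruct M.

Lemma iso_braid A B : iso (tens M A B) (tens M B A).
Proof. by exists (braid S A B), (braid S B A); rewrite !braid_invol. Qed.

Lemma thick_ideal_tensl_sym P X :
  thick_ideal M P -> thick_ideal M [set B | P (tens M X B)].
Proof.
move=> thickP; apply/thick_idealP; split; first exact: thick_subcategory_tensl.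
move=> B W PXB; split.
  exact: (thick_iso thickP (iso_assoc M X B W) (thick_tensl thickP W PXB)).
apply: (thick_iso thickP _ (thick_tensr thickP W PXB)).
apply: iso_trans (iso_sym (iso_assoc M W X B)) _.
exact: iso_trans (iso_tens M (iso_braid W X) (iso_refl B)) (iso_assoc M X W B).
Qed.

Lemma prime_completely_prime P : prime_ideal M P -> completely_prime_ideal M P.
Proof.
case=> thickP properP primeP; split=> // X Y PXY.
have genY : thick_gen [set Y] `<=` [set B | P (tens M X B)].
  by apply: thick_gen_min (thick_ideal_tensl_sym X thickP) _ => _ ->.
have genX : thick_gen [set X] `<=` \bigcap_(B in thick_gen [set Y]) [set A | P (tens M A B)].
  by apply: thick_gen_min (thick_ideal_annl thickP (thick_ideal_gen _)) _ => _ ->.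
have [genXP|genYP] := primeP _ _ (thick_ideal_gen [set X]) (thick_ideal_gen [set Y])
  (fun A B genA genB => genX A genA B genB).
- by left; apply: genXP; apply: thick_gen_sub.
- by right; apply: genYP; apply: thick_gen_sub.
Qed.

End Symmetric.

Definition maximal_avoiding (D P : set C) :=
  [/\ thick_ideal M P, (forall X, D X -> ~ P X) &
      forall Q, thick_ideal M Q -> P `<=` Q -> (forall X, D X -> ~ Q X) -> Q `<=` P].

(* Zorn's lemma runs over the sets [Q] such that [Q `|` Z] is a thick ideal, where [Z]
   is the ideal of zero objects: this lets the empty chain have an upper bound. *)
Lemma exists_maximal_avoiding (D : set C) :
  (forall X, D X -> ~ iso X zero_ob) -> exists P, maximal_avoiding D P.
Proof.
move=> DnZ; pose Z : set C := [set X | iso X zero_ob].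
have [Q0 [[thickQ0Z avoidQ0] maxQ0]] : exists Q0,
    (thick_ideal M (Q0 `|` Z) /\ forall X, D X -> ~ Q0 X) /\
    forall Q, Q0 `<` Q -> ~ (thick_ideal M (Q `|` Z) /\ forall X, D X -> ~ Q X).
  apply: Zorn_bigcup => H HF totH; split; last first.
    by move=> X DX [Q HQ QX]; case: (HF _ HQ) => _ /(_ X DX).
  have -> : (\bigcup_(Q in H) Q) `|` Z = \bigcup_(R in (setU^~ Z) @` H `|` [set Z]) R.
    apply/seteqP; split=> X.
      case=> [[Q HQ QX]|ZX]; last by exists Z => //; right.
      by exists (Q `|` Z); [left; exists Q|left].
    by case=> _ [[Q HQ <-] [QX|ZX]|-> ZX]; [left; exists Q|right|right].
  apply: thick_ideal_bigcup; first by exists Z; right.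
    by move=> _ [[Q /HF[? _] <-]|->] //; exact: thick_ideal_zero.
  move=> _ _ [[Q1 HQ1 <-]|->] [[Q2 HQ2 <-]|->];
    try by [left; apply: subsetUr|right; apply: subsetUr].
    by case: (totH _ _ HQ1 HQ2) => [Q12|Q21]; [left|right]; apply: setSU.
  by left.
have Zsub Q : thick_ideal M Q -> Z `<=` Q by move=> thickQ X; apply: thick_zero_ob.
exists (Q0 `|` Z); split=> //; first by move=> X DX [/(avoidQ0 X DX)|/(DnZ X DX)].
move=> Q thickQ Q0ZQ avoidQ X QX; apply: contrapT => nQ0X.
apply: (maxQ0 Q); first split.
- by move=> Y Q0Y; apply: Q0ZQ; left.
- by move=> /(_ X QX) Q0X; apply: nQ0X; left.
- by split=> //; rewrite (setUidl (Zsub _ thickQ)).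
Qed.

Lemma maximal_avoiding_tpow_prime A P :
  maximal_avoiding (range (tpow M A)) P -> prime_ideal M P.
Proof.
case=> thickP avoidP maxP.
have nPpow n : ~ P (tpow M A n) by apply: avoidP; exists n.
have meets I : ~ I `<=` P -> exists n, thick_gen (P `|` I) (tpow M A n).
  move=> nIP; apply: contrapT => nmeet; apply: nIP => X IX.
  apply: (maxP (thick_gen (P `|` I))) (thick_gen_sub (or_intror IX)).
  - exact: thick_ideal_gen.
  - by move=> Y PY; apply: thick_gen_sub; left.
  - by move=> _ [n _ <-] genn; apply: nmeet; exists n.
split=> //; first by exists A; apply: (nPpow 0%N).
move=> I J thickI thickJ IJP; apply: contrapT => /not_orP[/meets[n genIn] /meets[m genJm]].
apply: (nPpow (n + m).+1); apply: (thick_iso thickP (tpow_tens M A n m)).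
exact: thick_gen_tens thickP thickI thickJ IJP _ _ genIn genJm.
Qed.

Lemma exists_prime_avoiding A : ~ tnilpotent M A -> exists P, prime_ideal M P /\ ~ P A.
Proof.
move=> nilA; have [|P maxP] := @exists_maximal_avoiding (range (tpow M A)).
  by move=> _ [n _ <-] An0; apply: nilA; exists n.
exists P; split; first exact: maximal_avoiding_tpow_prime maxP.
by case: maxP => _ avoidP _; apply: avoidP; exists 0%N.
Qed.

Lemma Rad_tnilpotent A : Rad M A -> tnilpotent M A.
Proof.
move=> radA; apply: contrapT => /exists_prime_avoiding[P [primeP]].
by apply; apply: radA.
Qed.

Lemma completely_prime_tnilpotent P A :
  completely_prime_ideal M P -> tnilpotent M A -> P A.
Proof.
case=> thickP _ cprimeP [n /(thick_zero_ob thickP)].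
by elim: n => [|n IHn] //= /cprimeP[/IHn|].
Qed.

Lemma tnilpotent_CPRad A : tnilpotent M A -> CPRad M A.
Proof. by move=> nilA P /completely_prime_tnilpotent; apply. Qed.

Lemma CPRad_Rad (S : SymStruct M) A : CPRad M A -> Rad M A.
Proof. by move=> cpradA P /(prime_completely_prime S) /cpradA. Qed.

End ThickIdeals.

Theorem mainTheorem13 (C : PreaddCat) (T : TriStruct C) (M : MonStruct T) :
  (* (a) *)
  (forall A : C, Rad M A -> tnilpotent M A) /\
  (* (b) *)
  ((exists P : C -> Prop, completely_prime_ideal M P) ->
     (forall A : C, Rad M A -> tnilpotent M A) /\ (forall A : C, tnilpotent M A -> CPRad M A)) /\
  (* (c) *)
  (forall S : SymStruct M,
     (forall A : C, Rad M A <-> tnilpotent M A) /\ (forall A : C, tnilpotent M A <-> CPRad M A)).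
Proof.
split; first exact: Rad_tnilpotent.
split=> [_|S]; first by split=> A; [apply: Rad_tnilpotent|apply: tnilpotent_CPRad].
split=> A; split.
- exact: Rad_tnilpotent.
- by move/tnilpotent_CPRad/(CPRad_Rad S).
- exact: tnilpotent_CPRad.
- by move/(CPRad_Rad S)/Rad_tnilpotent.
Qed.
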